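(* Let $r\ge2$ be an integer and $m,\ell$ positive integers with $2^m>r$ and $2^{m+\ell}>r^2$. Let $z\in\{0,1,\dots,r-1\}$, $j=j_0(z)$, and let $\mathcal L\subset\mathbb R^2$ be the lattice spanned by $(j,\tfrac12)$ and $(2^{m+\ell},0)$. Then, up to sign, the shortest non-zero vector of $\mathcal L$ is unique and equals $\vec u=(\alpha_0(z)/d,\ \tilde r/2)$ where $d=\gcd(r,z)$, $\tilde r=r/d$ and $\alpha_0(z)=rj_0(z)-2^{m+\ell}z$; in particular its second component is $\pm r/(2\gcd(r,z))$.
   Context: For real $f$, $\mathrm{round}(f)$ is the integer $f+\delta_f$ with $\delta_f\in(-1/2,1/2]$. For $z\in\{0,\dots,r-1\}$, $j_0(z)=\mathrm{round}(2^{m+\ell}z/r)$; then $\alpha_0(z)=rj_0(z)-2^{m+\ell}z\in(-r/2,r/2]$. Convention: $\gcd(r,0)=r$. Norms are Euclidean. *)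

From Stdlib Require Export Reals ZArith Lra Lia.
Open Scope R_scope.

(* round(f) = f + delta with delta in (-1/2, 1/2]:
   Stdlib's [up x] is the unique integer n with x < n <= x + 1,
   so up (f - 1/2) = n with n - f in (-1/2, 1/2]. *)
Definition round (f : R) : Z := up (f - / 2).

Definition twoPow (m l : nat) : Z := (2 ^ Z.of_nat (m + l))%Z.

Definition j0 (r : Z) (m l : nat) (z : Z) : Z :=
  round (IZR (twoPow m l) * IZR z / IZR r).

Definition alpha0 (r : Z) (m l : nat) (z : Z) : Z :=
  (r * j0 r m l z - twoPow m l * z)%Z.

Definition vnorm (v : R * R) : R := sqrt (fst v ^ 2 + snd v ^ 2).

Definition in_lattice (b1 b2 : R * R) (v : R * R) : Prop :=
  exists a b : Z,
    v = (IZR a * fst b1 + IZR b * fst b2, IZR a * snd b1 + IZR b * snd b2).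

(* Write lattice vectors as (x, a/2) with x = a j + b N and N = 2^(m+l); four times the squared
   norm is the integral form 4x^2 + a^2.  Put alpha0 = d A, r = d rt and d zp = z.  Then
   r x = a d A + N t with t = a d zp + b r.  If t = 0, coprimality of rt and zp forces a = k rt
   and x = k A, a k-fold multiple of u.  If t <> 0, then N > r^2 together with |2 d A| <= r makes
   4x^2 + a^2 > 2 r^2, whereas u has 4A^2 + rt^2 <= 2 r^2. *)

From Stdlib Require Import Reals ZArith Znumtheory Lra Lia.
Open Scope R_scope.

Definition qform (x a : Z) : Z := (4 * (x * x) + a * a)%Z.

Section IntegralForm.
Local Open Scope Z_scope.

Lemma qform_far_lattice_vector (r N al x a t : Z) :
  0 < r -> r * r < N -> 2 * Z.abs al <= r -> r * x = a * al + N * t -> t <> 0 ->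
  2 * (r * r) < qform x a.
Proof.
  intros Hr HN Hal Hx Ht; unfold qform.
  rewrite <- (Z.abs_square x), <- (Z.abs_square a).
  destruct (Z_le_gt_dec (2 * r) (Z.abs a)) as [Ha|Ha]; [nia|].
  assert (HNt : N <= r * Z.abs x + Z.abs a * Z.abs al).
  { assert (HNt : N <= Z.abs (N * t)) by (rewrite Z.abs_mul; nia).
    replace (N * t) with (r * x + - (a * al)) in HNt by lia.
    pose proof (Z.abs_triangle (r * x) (- (a * al))) as Htri.
    rewrite Z.abs_opp, !Z.abs_mul, (Z.abs_eq r) in Htri by lia; lia. }
  assert (Hlin : 2 * r - Z.abs a < 2 * Z.abs x) by nia.
  assert (Hsq : (2 * r - Z.abs a) * (2 * r - Z.abs a) < (2 * Z.abs x) * (2 * Z.abs x))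
    by (apply Z.mul_lt_mono_nonneg; lia).
  pose proof (Z.square_nonneg (r - Z.abs a)); nia.
Qed.

Lemma qform_scale (k x a : Z) : qform (k * x) (k * a) = k * k * qform x a.
Proof. unfold qform; ring. Qed.

Section ShortestVector.
Variables r N j d rt zp A : Z.
Hypothesis Hr : 0 < r.
Hypothesis HN : r * r < N.
Hypothesis Hd : 0 < d.
Hypothesis Hrt : r = d * rt.
Hypothesis Hcop : Z.gcd rt zp = 1.
Hypothesis HA : - r < 2 * (d * A) <= r.
Hypothesis Hj : r * j - N * (d * zp) = d * A.

Lemma qform_shortest_le : qform A rt <= 2 * (r * r).
Proof.
  assert (Hsq : (2 * (d * A)) * (2 * (d * A)) <= r * r) by nia.
  assert (Hdd : d * d * qform A rt = (2 * (d * A)) * (2 * (d * A)) + r * r)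
    by (unfold qform; subst r; ring).
  assert (0 <= (d * d - 1) * qform A rt) by (apply Z.mul_nonneg_nonneg; unfold qform; nia).
  nia.
Qed.

Lemma lattice_identity (a b : Z) :
  r * (a * j + b * N) = a * (d * A) + N * (a * (d * zp) + b * r).
Proof. rewrite <- Hj; ring. Qed.

Lemma lattice_vector_multiple (a b : Z) :
  a * (d * zp) + b * r = 0 -> exists k, a * j + b * N = k * A /\ a = k * rt.
Proof.
  intro Ht.
  assert (Hdvd : (rt | zp * a)).
  { exists (- b); apply (Z.mul_reg_l _ _ d); [lia|]; subst r; lia. }
  apply Z.gauss in Hdvd as [k Hk]; [|exact Hcop].
  exists k; split; [|exact Hk].
  apply (Z.mul_reg_l _ _ r); [lia|].
  rewrite lattice_identity, Ht, Hk; subst r; ring.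
Qed.

Lemma qform_lattice_ge (a b : Z) :
  (a * j + b * N <> 0 \/ a <> 0) ->
  qform A rt <= qform (a * j + b * N) a /\
  (qform (a * j + b * N) a = qform A rt ->
     (a * j + b * N = A /\ a = rt) \/ (a * j + b * N = - A /\ a = - rt)).
Proof.
  intro Hnz.
  destruct (Z.eq_dec (a * (d * zp) + b * r) 0) as [Ht|Ht].
  - destruct (lattice_vector_multiple a b Ht) as [k [Hx Ha]].
    rewrite Hx, Ha, qform_scale.
    assert (Hk : k <> 0) by (destruct Hnz; subst; lia).
    assert (Hpos : 0 < qform A rt) by (unfold qform; nia).
    assert (Hk2 : 1 <= k * k) by nia.
    split; [nia|].
    intro Heq.
    assert (Hkk : k * k = 1) by (apply (Z.mul_reg_r _ _ (qform A rt)); lia).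
    assert (Hk1 : k = 1 \/ k = -1) by nia.
    destruct Hk1; subst k; [left|right]; lia.
  - pose proof qform_shortest_le.
    assert (2 * (r * r) < qform (a * j + b * N) a).
    { apply (qform_far_lattice_vector r N (d * A) _ a (a * (d * zp) + b * r));
        auto using lattice_identity; lia. }
    split; lia.
Qed.

End ShortestVector.
End IntegralForm.

Lemma round_spec (f : R) : f - / 2 < IZR (round f) <= f + / 2.
Proof. unfold round; destruct (archimed (f - / 2)); lra. Qed.

Lemma alpha0_bound (r : Z) (m l : nat) (z : Z) :
  (0 < r)%Z -> (- r < 2 * alpha0 r m l z <= r)%Z.
Proof.
  intro Hr.
  assert (Hr' : 0 < IZR r) by now apply IZR_lt.
  pose proof (round_spec (IZR (twoPow m l) * IZR z / IZR r)) as [Hlo Hhi].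
  assert (Hq : IZR (twoPow m l) * IZR z / IZR r * IZR r = IZR (twoPow m l) * IZR z)
    by (field; lra).
  unfold alpha0, j0; split; [apply lt_IZR | apply le_IZR];
    rewrite ?opp_IZR, mult_IZR, minus_IZR, !mult_IZR; nra.
Qed.

Lemma in_lattice_half_basis (j N : Z) (v : R * R) :
  in_lattice (IZR j, / 2) (IZR N, 0) v ->
  exists a b : Z, v = (IZR (a * j + b * N), IZR a / 2).
Proof.
  intros [a [b ->]]; exists a, b; cbn.
  rewrite plus_IZR, !mult_IZR; f_equal; field.
Qed.

Lemma vnorm_half_integral (x a : Z) :
  vnorm (IZR x, IZR a / 2) = sqrt (IZR (qform x a) / 4).
Proof. unfold vnorm, qform; cbn [fst snd]; f_equal; rewrite plus_IZR, !mult_IZR; field. Qed.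

Lemma vnorm_half_integral_le (x a y b : Z) :
  (qform x a <= qform y b)%Z -> vnorm (IZR x, IZR a / 2) <= vnorm (IZR y, IZR b / 2).
Proof.
  intro H; rewrite !vnorm_half_integral; apply sqrt_le_1_alt.
  apply IZR_le in H; lra.
Qed.

Lemma vnorm_half_integral_inj (x a y b : Z) :
  vnorm (IZR x, IZR a / 2) = vnorm (IZR y, IZR b / 2) -> qform x a = qform y b.
Proof.
  assert (Hnn : forall x a, 0 <= IZR (qform x a) / 4).
  { intros x' a'; apply Rmult_le_pos; [apply IZR_le; unfold qform; nia | lra]. }
  rewrite !vnorm_half_integral; intro H; apply sqrt_inj in H; auto.
  apply eq_IZR; lra.
Qed.

Lemma gcd_coprime_cofactors (r z : Z) : (0 < r)%Z ->
  exists zp : Z, (0 < Z.gcd r z /\ r = Z.gcd r z * (r / Z.gcd r z) /\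
    z = Z.gcd r z * zp /\ Z.gcd (r / Z.gcd r z) zp = 1)%Z.
Proof.
  intro Hr.
  assert (Hd : (0 < Z.gcd r z)%Z).
  { pose proof (Z.gcd_nonneg r z).
    destruct (Z.eq_dec (Z.gcd r z) 0) as [E|E]; [apply Z.gcd_eq_0_l in E|]; lia. }
  destruct (Z.gcd_divide_r r z) as [zp Hz].
  exists zp; repeat split; auto.
  - exact (Zdivide_Zdiv_eq _ _ Hd (Z.gcd_divide_l r z)).
  - nia.
  - rewrite <- (Z.gcd_div_gcd r z (Z.gcd r z)) by lia.
    f_equal; apply Z.div_unique_exact; lia.
Qed.

Theorem lemma7 (r : Z) (m l : nat) (z : Z) :
  (2 <= r)%Z -> (0 < m)%nat -> (0 < l)%nat ->
  (r < 2 ^ Z.of_nat m)%Z -> (r * r < twoPow m l)%Z ->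
  (0 <= z < r)%Z ->
  let j := j0 r m l z in
  let b1 := (IZR j, / 2) in
  let b2 := (IZR (twoPow m l), 0) in
  let d := Z.gcd r z in
  let rt := (r / d)%Z in
  let u := (IZR (alpha0 r m l z) / IZR d, IZR rt / 2) in
  in_lattice b1 b2 u /\ u <> (0, 0) /\
  (forall v : R * R, in_lattice b1 b2 v -> v <> (0, 0) ->
     vnorm u <= vnorm v /\
     (vnorm v = vnorm u -> v = u \/ v = (- fst u, - snd u))) /\
  snd u = IZR r / (2 * IZR d).
Proof.
  intros Hr _ _ _ HN _ j b1 b2 d rt u.
  set (N := twoPow m l) in *.
  destruct (gcd_coprime_cofactors r z ltac:(lia)) as [zp [Hd [Hrt [Hzp Hcop]]]].
  fold d rt in Hd, Hrt, Hzp, Hcop.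
  set (A := (rt * j - N * zp)%Z).
  assert (Hj : (r * j - N * (d * zp) = d * A)%Z) by (unfold A; rewrite Hrt at 1; ring).
  assert (Halpha : alpha0 r m l z = (d * A)%Z)
    by (unfold alpha0; fold j N; rewrite <- Hj, <- Hzp; reflexivity).
  assert (HA := alpha0_bound r m l z ltac:(lia)); rewrite Halpha in HA.
  assert (Hu : u = (IZR A, IZR rt / 2)).
  { unfold u; rewrite Halpha, mult_IZR; f_equal; field; apply not_0_IZR; lia. }
  assert (Hrt0 : (0 < rt)%Z) by nia.
  pose proof (qform_lattice_ge r N j d rt zp A ltac:(lia) HN Hd Hrt Hcop HA Hj) as Hmin.
  rewrite Hu; split; [|split; [|split]].
  - exists rt, (- zp)%Z; cbn; f_equal; [|field].
    unfold A; rewrite minus_IZR, !mult_IZR, opp_IZR; ring.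
  - intro E; injection E as _ E.
    assert (Hrt_zero : IZR rt = 0) by lra; apply eq_IZR in Hrt_zero; lia.
  - intros v Hv Hv0.
    destruct (in_lattice_half_basis j N v Hv) as [a [b ->]].
    assert (Hnz : (a * j + b * N <> 0 \/ a <> 0)%Z).
    { destruct (Z.eq_dec a 0) as [->|]; [left|right; assumption].
      intro E; apply Hv0; rewrite E; f_equal; cbn; lra. }
    destruct (Hmin a b Hnz) as [Hle Heq]; split.
    + now apply vnorm_half_integral_le.
    + intro E; apply vnorm_half_integral_inj in E.
      destruct (Heq E) as [[-> ->] | [-> ->]]; [left; reflexivity | right].
      cbn; rewrite !opp_IZR; f_equal; field.
  - cbn; rewrite Hrt, mult_IZR; field; apply not_0_IZR; lia.
Qed.
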